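(* Let $q$ be a prime power and $n,t,m$ positive integers with $t\geq m$. Let $\ell$ be a positive integer such that $$ {\ell+s\choose t}\left(\frac{m}{q}\right)^{n}<s+1 $$ for some integer $s\geq 0$. Then $EGZ(t,\mathbb{F}_q^{n},m) > \ell$.
   Context: $\mathbb{F}_q^n$ is viewed as a commutative ring with coordinatewise operations. For elements $g_1,\dots,g_t$ of a commutative ring $R$, $e_m(g_1,\dots,g_t)=\sum_{1\leq i_1<\cdots<i_m\leq t}\prod_{j=1}^m g_{i_j}$. A sequence over $R$ is a finite list of elements of $R$ (repetitions allowed); a subsequence of length $t$ is obtained by choosing $t$ distinct positions. For a finite commutative ring $R$, $EGZ(t,R,m)$ is the smallest positive integer $\ell$ such that every sequence $S$ over $R$ of length $|S|\geq \ell$ contains a subsequence $S'$ of length $t$ with $e_m(S')=0$ in $R$; if no such $\ell$ exists, $EGZ(t,R,m)=\infty$. *)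

From HB Require Import structures.
From mathcomp Require Import all_boot all_order all_algebra.
Set Implicit Arguments. Unset Strict Implicit. Unset Printing Implicit Defensive.
Import Order.TTheory GRing.Theory Num.Theory.
Local Open Scope ring_scope.

(* The ring F^n with coordinatewise operations: {ffun 'I_n -> F}
   (MathComp equips finite functions into a ring with pointwise addition and multiplication). *)
Definition Fpow (F : finFieldType) (n : nat) := {ffun 'I_n -> F}.

Definition esym_seq (R : pzSemiRingType) (m : nat) (g : seq R) : R :=
  \sum_(I : {set 'I_(size g)} | #|I| == m) \prod_(i in I) nth 0 g i.

Definition EGZ_prop (R : pzSemiRingType) (t m L : nat) : Prop :=
  forall S : seq R, (L <= size S)%N ->
    exists msk : bitseq, size msk = size S /\ count id msk = t /\
      esym_seq m (mask msk S) = 0.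

(* EGZ(t,R,m) > l  :  no positive integer L <= l has the EGZ property, i.e.
   the least positive L with the property (if any; otherwise EGZ = oo)
   exceeds l. *)
Definition EGZ_gt (R : pzSemiRingType) (t m l : nat) : Prop :=
  forall L : nat, (0 < L)%N -> (L <= l)%N -> ~ EGZ_prop R t m L.

From HB Require Import structures.
From mathcomp Require Import all_boot all_order all_algebra.
From mathcomp Require Import zify.
Set Implicit Arguments. Unset Strict Implicit. Unset Printing Implicit Defensive.
Import Order.TTheory GRing.Theory Num.Theory.
Local Open Scope ring_scope.

(* Deletion method.  Draw N = l + s vectors of F^n uniformly at random.  Since
   e_m(x :: g) = x e_(m-1)(g) + e_m(g) is affine in x, a Schwartz-Zippel
   induction shows that a fixed t-subsequence has e_m = 0 in a given coordinate
   with probability at most m/q, hence in all n coordinates with probability at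
   most (m/q)^n.  The expected number of vanishing t-subsequences is thus at
   most C(N, t) (m/q)^n < s + 1, so some draw has at most s of them; deleting
   one vector from each leaves at least l vectors with no vanishing
   t-subsequence. *)

Lemma esym_seq0 (R : pzSemiRingType) (g : seq R) : esym_seq 0 g = 1.
Proof.
rewrite /esym_seq (big_pred1 set0) ?big_set0 // => I.
by rewrite cards_eq0.
Qed.

Lemma esym_seq_coef (R : comNzRingType) m (g : seq R) :
  esym_seq m g = (\prod_(x <- g) (x%:P * 'X + 1))`_m.
Proof.
rewrite (big_nth 0) big_mkord bigA_distr coef_sum; symmetry.
rewrite (bigID (fun I : {set 'I_(size g)} => #|I| == m)) /=.
rewrite [X in _ + X]big1 ?addr0 => [|I /negbTE mI]; last first.
  by rewrite -big_mkcond big_split -rmorph_prod prodr_const coefCM coefXn eq_sym mI mulr0.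
apply: eq_bigr => I /eqP <-.
by rewrite -big_mkcond big_split -rmorph_prod prodr_const coefCM coefXn eqxx mulr1.
Qed.

Lemma esym_seq_cons (R : comNzRingType) m (x : R) g :
  esym_seq m.+1 (x :: g) = x * esym_seq m g + esym_seq m.+1 g.
Proof.
by rewrite !esym_seq_coef big_cons mulrDl mul1r coefD -mulrA coefCM coefXM.
Qed.

Lemma esym_seq_ffunE (aT : finType) (R : pzSemiRingType) m
    (g : seq {ffun aT -> R}) a :
  esym_seq m g a = esym_seq m [seq (f : {ffun aT -> R}) a | f <- g].
Proof.
have eval_prod I (h : I -> {ffun aT -> R}) (r : seq I) (P : pred I) :
    (\prod_(i <- r | P i) h i) a = \prod_(i <- r | P i) h i a.
  by apply: (big_morph (fun f : {ffun aT -> R} => f a)) => [f f'|]; rewrite ffunE.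
rewrite {2}/esym_seq size_map sum_ffunE; apply: eq_bigr => I _.
by rewrite eval_prod; apply: eq_bigr => i _; rewrite (nth_map 0).
Qed.

Lemma card_tuple_cons (T : finType) N (P : pred (N.+1.-tuple T)) :
  #|[set w | P w]| = (\sum_(w : N.-tuple T) #|[set x | P [tuple of x :: w]]|)%N.
Proof.
rewrite -sum1dep_card; under [RHS]eq_bigr => w _ do rewrite -sum1dep_card.
rewrite pair_big_dep (reindex (fun p : N.-tuple T * T => [tuple of p.2 :: p.1])) /=.
  by apply: eq_bigl => -[w x].
exists (fun w : N.+1.-tuple T => ([tuple of behead w], thead w)) => [[w x]|w] _ /=.
  by rewrite theadE; congr pair; apply: val_inj.
by rewrite -tuple_eta.
Qed.

Lemma card_linear_roots (F : finFieldType) (a b : F) :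
  (#|[set x : F | (x * a + b == 0)%R]| <= if (a == 0)%R then #|F| else 1)%N.
Proof.
have [_|a_neq0] := eqVneq a 0; first exact: max_card.
rewrite -(card1 (- b / a)); apply/subset_leq_card/subsetP => x.
by rewrite !inE addr_eq0 => /eqP <-; rewrite mulfK.
Qed.

Lemma card_esym_mask_eq0 (F : finFieldType) N m (msk : bitseq) :
  size msk = N -> (m <= count id msk)%N ->
  (#|[set w : N.-tuple F | (esym_seq m (mask msk w) == 0)%R]| * #|F|
     <= m * #|F| ^ N)%N.
Proof.
elim: msk N m => [|b msk IH] [|N] [|m] //= size_msk le_m_count; try
  by rewrite (_ : [set w | _] = set0) ?cards0 //;
     apply/setP => w; rewrite !inE esym_seq0 oner_eq0.
case: size_msk le_m_count => size_msk.
rewrite card_tuple_cons /=; case: b => /= le_m_count.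
  apply: (@leq_trans ((\sum_(w : N.-tuple F)
      (1 + if (esym_seq m (mask msk w) == 0)%R then #|F| else 0)) * #|F|)%N).
    rewrite leq_mul2r; apply/orP; right; apply: leq_sum => w _.
    under eq_finset => x do rewrite esym_seq_cons.
    by apply: leq_trans (card_linear_roots _ _) _; case: eqP.
  rewrite big_split /= sum_nat_const card_tuple -big_mkcond sum_nat_cond_const.
  have := IH N m size_msk le_m_count; rewrite expnS.
  move: #|F| (#|F| ^ N)%N #|[set _ | _]| => q Q Z; nia.
have card_const (c : bool) : #|[set _ : F | c]| = if c then #|F| else 0%N.
  by case: c; rewrite ?cardsT ?cards0.
under eq_bigr => w _ do rewrite card_const.
rewrite -big_mkcond sum_nat_cond_const.
have := IH N m.+1 size_msk le_m_count; rewrite expnS.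
move: #|F| (#|F| ^ N)%N #|[set _ | _]| => q Q Z; nia.
Qed.

Lemma enum_filter (T : finType) (A : {pred T}) :
  enum A = [seq x <- enum T | x \in A].
Proof. by rewrite enumT. Qed.

Lemma enum_set_mask (T : finType) (A : {set T}) (msk : bitseq) :
  enum [set x in mask msk (enum A)] = mask msk (enum A).
Proof.
set u := mask msk (enum A).
have sub_u : subseq u (enum T).
  by apply: subseq_trans (mask_subseq _ _) _; rewrite enum_filter filter_subseq.
rewrite enum_filter [RHS](subseq_uniqP (enum_uniq T) sub_u).
by apply: eq_filter => x; rewrite inE.
Qed.

Lemma map_tnth_enum_set (T : Type) N (w : N.-tuple T) (J : {set 'I_N}) :
  [seq tnth w i | i <- enum J] = mask [seq i \in J | i <- enum 'I_N] w.
Proof. by rewrite enum_filter filter_mask map_mask map_tnth_enum. Qed.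

Lemma count_mem_enum_set (T : finType) (J : {set T}) :
  count id [seq i \in J | i <- enum T] = #|J|.
Proof. by rewrite count_map -size_filter cardE enum_filter. Qed.

Lemma hypergraph_independent_set (T : finType) (B : {set {set T}}) :
  set0 \notin B ->
  exists2 K : {set T}, (#|T| <= #|K| + #|B|)%N & forall J, J \in B -> ~~ (J \subset K).
Proof.
move=> B_0; have [->|[J0 J0_B]] := set_0Vmem B.
  by exists setT => [|J]; rewrite ?cardsT ?cards0 ?addn0 ?inE.
have [x0 _] : exists x0, x0 \in J0.
  by apply/set0Pn; apply: contraNneq B_0 => <-.
pose pick_in (J : {set T}) := odflt x0 [pick x in J].
have pick_inP J : J \in B -> pick_in J \in J.
  rewrite /pick_in; case: pickP => // J_0 J_B; case/negP: B_0.
  by rewrite (_ : set0 = J) //; apply/setP => x; rewrite inE J_0.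
exists (~: (pick_in @: B)) => [|J J_B].
  by rewrite -(cardsC (pick_in @: B)) addnC leq_add2l leq_imset_card.
apply/subsetPn; exists (pick_in J); first exact: pick_inP.
by rewrite inE negbK imset_f.
Qed.

Lemma exists_leq_of_sum_lt (T : finType) (f : T -> nat) s :
  (\sum_x f x < #|T| * s.+1)%N -> exists x, (f x <= s)%N.
Proof.
case: (pickP (fun x => f x <= s)%N) => [x fx _|all_gt]; first by exists x.
rewrite ltnNge -sum_nat_const leq_sum // => x _.
by rewrite ltnNge all_gt.
Qed.

Section VanishingSubsets.

Variables (F : finFieldType) (n N m t : nat).

(* A draw of N vectors of F^n is stored by its n coordinate rows, so that
   vanishing in every coordinate becomes membership in [ffun_on]. *)
Definition column (C : {ffun 'I_n -> N.-tuple F}) (i : 'I_N) : Fpow F n :=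
  [ffun j => tnth (C j) i].

Definition columns_in (C : {ffun 'I_n -> N.-tuple F}) (J : {set 'I_N}) : seq (Fpow F n) :=
  [seq column C i | i <- enum J].

Definition vanishing_sets (C : {ffun 'I_n -> N.-tuple F}) : {set {set 'I_N}} :=
  [set J : {set 'I_N} | (#|J| == t) && (esym_seq m (columns_in C J) == 0)].

Lemma esym_columns_in_eq0 (C : {ffun 'I_n -> N.-tuple F}) (J : {set 'I_N}) :
  (esym_seq m (columns_in C J) == 0) =
  (C \in ffun_on [set w : N.-tuple F | esym_seq m [seq tnth w i | i <- enum J] == 0]).
Proof.
have coordE j :
    [seq (v : Fpow F n) j | v <- columns_in C J] = [seq tnth (C j) i | i <- enum J].
  by rewrite -map_comp; apply: eq_map => i; rewrite /= ffunE.
apply/eqP/ffun_onP => [vanish j | vanish].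
  by rewrite inE -coordE -esym_seq_ffunE vanish ffunE.
apply/ffunP => j; rewrite esym_seq_ffunE coordE ffunE; apply/eqP.
by have := vanish j; rewrite inE.
Qed.

Lemma sum_card_vanishing_sets : (m <= t)%N ->
  ((\sum_C #|vanishing_sets C|) * #|F| ^ n <= 'C(N, t) * (m * #|F| ^ N) ^ n)%N.
Proof.
move=> le_mt.
under eq_bigr => C _ do rewrite -sum1dep_card big_mkcondr.
rewrite exchange_big big_distrl /=.
rewrite -[in X in (_ <= X * _)%N](card_ord N) -card_draws -sum_nat_cond_const.
apply: leq_sum => J /eqP card_J.
rewrite -big_mkcond sum1dep_card.
under eq_finset => C do rewrite esym_columns_in_eq0.
rewrite cardsE card_ffun_on card_ord -expnMn.
have leq_expn2r k a b : (a <= b)%N -> (a ^ k <= b ^ k)%N.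
  by move=> le_ab; elim: k => // k IH; rewrite !expnS leq_mul.
apply: leq_expn2r.
under eq_finset => w do rewrite map_tnth_enum_set.
apply: card_esym_mask_eq0; first by rewrite size_map size_enum_ord.
by rewrite count_mem_enum_set card_J.
Qed.

Lemma exists_few_vanishing_sets s : (m <= t)%N ->
  ('C(N, t) * m ^ n < s.+1 * #|F| ^ n)%N ->
  exists C, (#|vanishing_sets C| <= s)%N.
Proof.
move=> le_mt lt_s; apply: exists_leq_of_sum_lt.
have q_gt0 : (0 < #|F|)%N by apply/card_gt0P; exists 0.
have Q_gt0 : (0 < #|F| ^ n)%N by rewrite expn_gt0 q_gt0.
rewrite card_ffun card_tuple card_ord -(ltn_pmul2r Q_gt0).
apply: leq_ltn_trans (sum_card_vanishing_sets le_mt) _.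
rewrite expnMn mulnA -[X in (_ < X)%N]mulnA [X in (_ < X)%N]mulnC.
by rewrite ltn_pmul2r ?expn_gt0 ?q_gt0.
Qed.

Lemma esym_mask_columns_in_neq0 C (K : {set 'I_N}) (msk : bitseq) :
  (forall J, J \in vanishing_sets C -> ~~ (J \subset K)) ->
  size msk = #|K| -> count id msk = t ->
  esym_seq m (mask msk (columns_in C K)) != 0.
Proof.
move=> indep_K size_msk count_msk; apply/eqP => esym_eq0.
pose J := [set i in mask msk (enum K)].
have enum_J : enum J = mask msk (enum K) := enum_set_mask K msk.
have J_sub_K : J \subset K.
  by apply/subsetP => i; rewrite inE => /mem_mask; rewrite mem_enum.
have J_vanishing : J \in vanishing_sets C.
  rewrite inE cardE enum_J size_mask ?count_msk ?eqxx /=; last by rewrite size_msk cardE.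
  by rewrite /columns_in enum_J map_mask esym_eq0.
by have := indep_K J J_vanishing; rewrite J_sub_K.
Qed.

End VanishingSubsets.

Theorem theorem2p5 (F : finFieldType) (n t m l : nat) :
  (0 < n)%N -> (0 < t)%N -> (0 < m)%N -> (m <= t)%N -> (0 < l)%N ->
  (exists s : nat,
     ('C(l + s, t))%:R * ((m%:R / (#|F|)%:R) ^+ n) < (s + 1)%:R :> rat) ->
  EGZ_gt (Fpow F n) t m l.
Proof.
move=> _ t_gt0 _ le_mt _ [s lt_s] L _ le_Ll EGZ_L.
have q_gt0 : (0 < #|F|)%N by apply/card_gt0P; exists 0.
have lt_s_nat : ('C(l + s, t) * m ^ n < s.+1 * #|F| ^ n)%N.
  move: lt_s; rewrite expr_div_n mulrA ltr_pdivrMr ?exprn_gt0 ?ltr0n //.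
  by rewrite -!natrX -!natrM ltr_nat addn1.
have [C few_C] := exists_few_vanishing_sets le_mt lt_s_nat.
have [|K card_K indep_K] := @hypergraph_independent_set _ (vanishing_sets m t C).
  by rewrite inE cards0 eq_sym (negbTE (lt0n_neq0 t_gt0)).
have size_K : (L <= size (columns_in C K))%N.
  rewrite size_map -cardE (leq_trans le_Ll) // -(leq_add2r s).
  by rewrite (leq_trans _ (leq_add (leqnn _) few_C)) // -{1}(card_ord (l + s)).
have [msk [size_msk [count_msk esym_eq0]]] := EGZ_L _ size_K.
rewrite size_map -cardE in size_msk.
by have := esym_mask_columns_in_neq0 indep_K size_msk count_msk; rewrite esym_eq0 eqxx.
Qed.
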